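(* Let $R$ be a (unital, not necessarily associative) ring, let $\sigma\colon R\to R$ be an additive surjection with $\sigma(1)=1$, and let $\delta\colon R\to R$ be an additive map with $\delta(1)=0$. Then for every $n\in\mathbb{N}$, in the non-associative Ore extension $R[X;\sigma,\delta]$ one has $\sum_{i=0}^n X^iR=\sum_{i=0}^n RX^i$, as right $R$-modules (in particular as subsets of $R[X;\sigma,\delta]$).
   Context: $\mathbb{N}$ includes $0$. For a non-associative ring $R$ and additive maps $\sigma,\delta\colon R\to R$ with $\sigma(1)=1$, $\delta(1)=0$, the non-associative Ore extension $R[X;\sigma,\delta]$ is the additive group of formal sums $\sum_{i\in\mathbb{N}} r_iX^i$ ($r_i\in R$, finitely many non-zero) with pointwise addition and multiplication the biadditive extension of $(rX^m)(sX^n)=\sum_{i\in\mathbb{N}}(r\pi_i^m(s))X^{i+n}$ for $r,s\in R$, $m,n\in\mathbb{N}$, where $\pi_i^m$ is the sum of all $\binom{m}{i}$ compositions of $i$ copies of $\sigma$ and $m-i$ copies of $\delta$, and $\pi_i^m=0$ if $i>m$. $R$ is identified with $RX^0$; $X^iR$ denotes $\{X^i r: r\in R\}$ and $RX^i=\{rX^i:r\in R\}$, sums of such sets are sets of sums. *)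

From HB Require Import structures.
From mathcomp Require Import all_boot all_algebra.
Set Implicit Arguments. Unset Strict Implicit. Unset Printing Implicit Defensive.
Import GRing.Theory.
Local Open Scope ring_scope.

Record naring := NARing {
  nar_car :> zmodType;
  nar_mul : nar_car -> nar_car -> nar_car;
  nar_one : nar_car;
  nar_mulDl : forall x y z, nar_mul (x + y) z = nar_mul x z + nar_mul y z;
  nar_mulDr : forall x y z, nar_mul x (y + z) = nar_mul x y + nar_mul x z;
  nar_mul1r : forall x, nar_mul nar_one x = x;
  nar_mulr1 : forall x, nar_mul x nar_one = x
}.

Section Ore.
Variables (R : naring) (sigma delta : R -> R).

Definition word_comp (w : seq bool) : R -> R :=
  foldr (fun (b : bool) f => (if b then sigma else delta) \o f) id w.

(* pi_i^m : sum of all compositions of i copies of sigma and m-i copies of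
   delta (an empty sum, i.e. 0, when i > m) *)
Definition pi_ore (m i : nat) (x : R) : R :=
  \sum_(w : m.-tuple bool | count id w == i) word_comp w x.

(* Elements of R[X;sigma,delta] are given by coefficient sequences
   [:: r_0; ...; r_k] (meaning sum r_j X^j); they are compared through their
   coefficient functions nat -> R (so trailing zeros are irrelevant). *)
Definition coef (p : seq R) : nat -> R := fun k => nth 0 p k.

Definition monom (r : R) (i : nat) : seq R := rcons (nseq i 0) r.

(* coefficient function of the product p * q in R[X;sigma,delta]: the
   biadditive extension of (r X^m)(s X^n) = sum_i (r pi_i^m(s)) X^(i+n) *)
Definition ore_mul (p q : seq R) : nat -> R := fun k =>
  \sum_(m < size p) \sum_(n < size q) \sum_(i < m.+1 | (i + n)%N == k)
     nar_mul (nth 0 p m) (pi_ore m i (nth 0 q n)).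

Definition sum_XiR (n : nat) : (nat -> R) -> Prop := fun f =>
  exists r : 'I_n.+1 -> R,
    f = (fun k => \sum_(i < n.+1) ore_mul (monom (nar_one R) i) (monom (r i) 0) k).

Definition sum_RXi (n : nat) : (nat -> R) -> Prop := fun f =>
  exists r : 'I_n.+1 -> R,
    f = (fun k => \sum_(i < n.+1) coef (monom (r i) i) k).

End Ore.

(** Right multiplication by a scalar is triangular: [X^i r = sum_(k <= i) pi_k^i(r) X^k]
    with diagonal coefficient [sigma^i(r)].  Hence [sum X^i R] is contained in
    [sum R X^i], and since every [sigma^i] is surjective the triangular system can be
    solved by back-substitution from the top degree down, giving the reverse
    inclusion.  Additivity of [sigma], [delta] and their values at [1] are not
    needed. *)

From mathcomp Require Import all_boot all_algebra.
From Stdlib Require Import FunctionalExtensionality PropExtensionality.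
Local Open Scope ring_scope.
Import GRing.Theory.

Lemma nar_mul0r (R : naring) (x : R) : nar_mul 0 x = 0.
Proof.
have h := nar_mulDl 0 0 x; rewrite addr0 in h.
by apply: (@addrI _ (nar_mul 0 x)); rewrite -h addr0.
Qed.

Section OreMonomials.
Variables (R : naring) (sigma delta : R -> R).

Lemma word_comp_nseq_true m (x : R) :
  word_comp sigma delta (nseq m true) x = iter m sigma x.
Proof. by elim: m => //= m ->. Qed.

Lemma pi_ore_diag m (x : R) : pi_ore sigma delta m m x = iter m sigma x.
Proof.
rewrite /pi_ore (big_pred1 (nseq_tuple m true)) /=; first exact: word_comp_nseq_true.
move=> w /=; apply/idP/eqP => [count_w | ->]; last by rewrite count_nseq mul1n.
have all_w : all (pred1 true) w.
  by apply: sub_all (_ : all id w) => [b /= ->|]; rewrite // all_count size_tuple.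
by apply: val_inj; move/all_pred1P: all_w => /= ->; rewrite size_tuple.
Qed.

Lemma coef_ore_mul_X_C i (r : R) k :
  ore_mul sigma delta (monom (nar_one R) i) (monom r 0) k =
  if (k <= i)%N then pi_ore sigma delta i k r else 0.
Proof.
rewrite /ore_mul /monom size_rcons size_nseq /= big_ord_recr /= big1 => [|m _].
  rewrite add0r big_ord1 /= nth_rcons size_nseq ltnn eqxx.
  under eq_bigl do rewrite addn0.
  under eq_bigr do rewrite nar_mul1r.
  by rewrite (big_ord1_eq _ (fun j => pi_ore sigma delta i j r) k i.+1) ltnS.
rewrite big_ord1 nth_rcons size_nseq ltn_ord nth_nseq ltn_ord.
by rewrite big1 // => j _; rewrite nar_mul0r.
Qed.

Lemma coef_sum_XiR n (r : 'I_n -> R) k :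
  \sum_(i < n) ore_mul sigma delta (monom (nar_one R) i) (monom (r i) 0) k =
  \sum_(i < n | (k <= i)%N) pi_ore sigma delta i k (r i).
Proof. by rewrite [RHS]big_mkcond; apply: eq_bigr => i _; rewrite coef_ore_mul_X_C. Qed.

Lemma coef_sum_RXi n (s : 'I_n.+1 -> R) k :
  \sum_(i < n.+1) coef (monom (s i) i) k = if (k < n.+1)%N then s (inord k) else 0.
Proof.
transitivity (\sum_(i < n.+1 | val i == k) s (inord k)).
  rewrite [RHS]big_mkcond; apply: eq_bigr => i _.
  rewrite /coef /monom nth_rcons size_nseq nth_nseq.
  by case: (ltngtP k i) => // ->; rewrite inord_val.
exact: (big_ord1_eq _ (fun _ => s (inord k)) k n.+1).
Qed.

Hypothesis sigma_surj : forall y : R, exists x : R, sigma x = y.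

Lemma iter_sigma_surj m (y : R) : exists x, iter m sigma x = y.
Proof.
elim: m y => [|m IH] y; first by exists y.
have [z <-] := sigma_surj y; have [x <-] := IH z; by exists x.
Qed.

Lemma ore_triangular_solvable n (t : nat -> R) : exists r : nat -> R,
  forall k, (k < n)%N -> \sum_(i < n | (k <= i)%N) pi_ore sigma delta i k (r i) = t k.
Proof.
elim: n t => [|n IH] t; first by exists (fun _ => 0).
have [x top_x] := iter_sigma_surj n (t n).
have [r low_r] := IH (fun k => t k - pi_ore sigma delta n k x).
exists (fun i => if i == n then x else r i) => k; rewrite ltnS => le_kn.
rewrite big_mkcond big_ord_recr /= eqxx le_kn -big_mkcond.
under eq_bigr => i _ do rewrite ltn_eqF //.
case: (ltngtP k n) le_kn => // [lt_kn _ | -> _]; first by rewrite low_r ?subrK.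
by rewrite big_pred0 ?add0r ?pi_ore_diag // => i; rewrite leqNgt ltn_ord.
Qed.

End OreMonomials.

Section SumInclusions.
Variables (R : naring) (sigma delta : R -> R).

Lemma sum_XiR_sub_RXi n f : sum_XiR sigma delta n f -> sum_RXi n f.
Proof.
case=> r ->; exists (fun k : 'I_n.+1 =>
  \sum_(i < n.+1 | (k <= i)%N) pi_ore sigma delta i k (r i)).
apply: functional_extensionality => k; rewrite coef_sum_XiR coef_sum_RXi.
case: ifP => lt_kn; first by rewrite inordK.
by rewrite big1 // => i le_ki; rewrite (leq_ltn_trans le_ki (ltn_ord i)) in lt_kn.
Qed.

Hypothesis sigma_surj : forall y : R, exists x : R, sigma x = y.

Lemma sum_RXi_sub_XiR n f : sum_RXi n f -> sum_XiR sigma delta n f.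
Proof.
case=> s ->.
have [r solves] := @ore_triangular_solvable R sigma delta sigma_surj n.+1
  (fun k => if (k < n.+1)%N then s (inord k) else 0).
exists (fun i => r i); apply: functional_extensionality => k.
rewrite coef_sum_XiR coef_sum_RXi.
case: (ltnP k n.+1) => [lt_kn | le_nk]; first by rewrite solves // lt_kn.
by rewrite big1 // => i le_ki; move: (leq_ltn_trans le_ki (ltn_ord i));
  rewrite ltnNge le_nk.
Qed.

End SumInclusions.

Theorem lemma12 (R : naring) (sigma delta : R -> R)
  (sigma_add : forall x y : R, sigma (x + y) = sigma x + sigma y)
  (sigma_surj : forall y : R, exists x : R, sigma x = y)
  (sigma1 : sigma (nar_one R) = nar_one R)
  (delta_add : forall x y : R, delta (x + y) = delta x + delta y)
  (delta1 : delta (nar_one R) = 0) :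
  forall n : nat, sum_XiR sigma delta n = sum_RXi n.
Proof.
move=> n; apply: functional_extensionality => f.
by apply: propositional_extensionality; split;
  [exact: sum_XiR_sub_RXi | exact: sum_RXi_sub_XiR].
Qed.
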